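(* Let $Q=(q_n)$ be a basic sequence with $\lim_{N\to\infty}\frac1N\sum_{n=1}^N\frac1{q_n}=0$, and let $x=E_0.E_1E_2\cdots$ (w.r.t. $Q$) be $Q$-distribution normal. If $y=F_0.F_1F_2\cdots$ (w.r.t. $Q$) satisfies $\lim_{n\to\infty}\frac{|E_n-F_n|}{q_n}=0$, then $y$ is $Q$-distribution normal.
   Context: A basic sequence is a sequence $Q=(q_n)_{n\ge1}$ of integers with $q_n\ge2$. The $Q$-Cantor series expansion of a real $x$ is the unique expansion $x=E_0+\sum_{n\ge1}\frac{E_n}{q_1\cdots q_n}$ with $E_0=\lfloor x\rfloor$, $E_n\in\{0,\dots,q_n-1\}$ and $E_n\ne q_n-1$ infinitely often; written $x=E_0.E_1E_2\cdots$ w.r.t. $Q$. Let $T_{Q,n}(x)=\left(\prod_{j=1}^n q_j\right)x \bmod 1$. A real $x$ is $Q$-distribution normal if $(T_{Q,n}(x))_{n\ge0}$ is uniformly distributed modulo $1$. *)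

From Stdlib Require Import Reals Lra Lia ZArith.
Open Scope R_scope.

(* A basic sequence: q_n >= 2 for all n >= 1 (q 0 is unused). *)
Definition basic_seq (q : nat -> nat) : Prop := forall n, (1 <= n)%nat -> (2 <= q n)%nat.

Fixpoint Qprod (q : nat -> nat) (n : nat) : R :=
  match n with
  | O => 1
  | S m => Qprod q m * INR (q (S m))
  end.

Definition Q_expansion (q : nat -> nat) (x : R) (E : nat -> Z) : Prop :=
  E O = Int_part x /\
  (forall n, (1 <= n)%nat -> (0 <= E n)%Z /\ (E n <= Z.of_nat (q n) - 1)%Z) /\
  (forall N, exists n, (N <= n)%nat /\ (1 <= n)%nat /\ E n <> (Z.of_nat (q n) - 1)%Z) /\
  infinite_sum (fun k => IZR (E (S k)) / Qprod q (S k)) (x - IZR (E O)).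

Definition T_Q (q : nat -> nat) (n : nat) (x : R) : R := frac_part (Qprod q n * x).

Fixpoint count_in (u : nat -> R) (a b : R) (N : nat) : nat :=
  match N with
  | O => O
  | S m => (count_in u a b m +
            if Rle_dec a (frac_part (u m)) then
              if Rlt_dec (frac_part (u m)) b then 1 else 0
            else 0)%nat
  end.

Definition u_d_mod_1 (u : nat -> R) : Prop :=
  forall a b, 0 <= a -> a < b -> b <= 1 ->
    Un_cv (fun N => INR (count_in u a b N) / INR N) (b - a).

Definition Q_distribution_normal (q : nat -> nat) (x : R) : Prop :=
  u_d_mod_1 (fun n => T_Q q n x).

Fixpoint sum_inv_q (q : nat -> nat) (N : nat) : R :=
  match N with
  | O => 0
  | S m => sum_inv_q q m + / INR (q (S m))
  end.

From Stdlib Require Import Reals Lra Lia ZArith.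
Open Scope R_scope.

(* Writing r_n = E_0 + E_1/q_1 + ... + E_n/(q_1...q_n), the tail x - r_n lies in [0, 1/(q_1...q_n))
   (a digit below q_k - 1 occurs beyond n), so T_{Q,n}(x) = (q_1...q_n)(x - r_n) and
   q_{n+1} T_{Q,n}(x) = T_{Q,n+1}(x) + E_{n+1}.  Hence
   |T_{Q,n}(x) - T_{Q,n}(y)| <= (|E_{n+1} - F_{n+1}| + 1) / q_{n+1}, whose Cesaro mean tends to 0
   by the two hypotheses.  Finally, perturbing a sequence by amounts of vanishing Cesaro mean
   preserves uniform distribution mod 1: at most (sum of perturbations)/delta points can cross
   the delta-neighbourhood of an interval's endpoints. *)

Lemma frac_part_frac_part (r : R) : frac_part (frac_part r) = frac_part r.
Proof.
  destruct (base_fp r) as [H0 H1].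
  symmetry; apply (Int_part_frac_part_spec (frac_part r) 0); simpl; lra.
Qed.

Lemma Un_cv_bounds (u : nat -> R) (k : nat) (lo hi l : R) :
  (forall i, lo <= u (k + i)%nat <= hi) -> Un_cv u l -> lo <= l <= hi.
Proof.
  intros Hb Hu.
  assert (Hclose : forall eps, eps > 0 -> exists i, Rabs (u (k + i)%nat - l) < eps).
  { intros eps Heps; destruct (Hu eps Heps) as [N HN].
    exists N; apply HN; lia. }
  split; apply Rnot_lt_le; intro Hout.
  - destruct (Hclose (lo - l)) as [i Hi]; [lra|].
    specialize (Hb i); apply Rabs_def2 in Hi; lra.
  - destruct (Hclose (l - hi)) as [i Hi]; [lra|].
    specialize (Hb i); apply Rabs_def2 in Hi; lra.
Qed.

Definition indicator (a b t : R) : nat :=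
  if Rle_dec a t then if Rlt_dec t b then 1%nat else 0%nat else 0%nat.

Lemma count_in_S (u : nat -> R) (a b : R) (N : nat) :
  count_in u a b (S N) = (count_in u a b N + indicator a b (frac_part (u N)))%nat.
Proof. reflexivity. Qed.

Lemma indicator_le_1 (a b t : R) : INR (indicator a b t) <= 1.
Proof. unfold indicator; repeat destruct Rle_dec; repeat destruct Rlt_dec; simpl; lra. Qed.

Section CloseIntervals.

(* [[a1, b1)] sits inside [[a2, b2)] with margin [delta], as seen from points of [[0, 1)]. *)
Variables (a1 b1 a2 b2 delta : R).
Hypothesis delta_pos : 0 < delta.
Hypothesis margin : forall s t, 0 <= s < 1 -> 0 <= t < 1 -> Rabs (s - t) < delta ->
  a1 <= s < b1 -> a2 <= t < b2.

(* Points closer than [delta] are counted alike; farther ones are paid for by [d / delta >= 1]. *)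
Lemma indicator_close (s t d : R) : 0 <= s < 1 -> 0 <= t < 1 -> Rabs (s - t) <= d ->
  INR (indicator a1 b1 s) <= INR (indicator a2 b2 t) + d / delta.
Proof.
  intros Hs Ht Hd.
  assert (Hd0 : 0 <= d / delta).
  { unfold Rdiv; apply Rmult_le_pos; [eapply Rle_trans; [apply Rabs_pos | exact Hd] |].
    left; apply Rinv_0_lt_compat, delta_pos. }
  destruct (Rlt_or_le (Rabs (s - t)) delta) as [Hnear | Hfar].
  - unfold indicator.
    destruct (Rle_dec a1 s), (Rlt_dec s b1), (Rle_dec a2 t), (Rlt_dec t b2); simpl; try lra;
      destruct (margin s t Hs Ht Hnear); lra.
  - assert (1 <= d / delta).
    { apply (Rmult_le_reg_r delta); [exact delta_pos|].
      unfold Rdiv; rewrite Rmult_assoc, Rinv_l; lra. }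
    pose proof (indicator_le_1 a1 b1 s); pose proof (pos_INR (indicator a2 b2 t)); lra.
Qed.

Lemma count_in_close (u v D : nat -> R) (N : nat) :
  (forall n, Rabs (frac_part (u n) - frac_part (v n)) <= D n) ->
  INR (count_in u a1 b1 (S N)) <= INR (count_in v a2 b2 (S N)) + sum_f_R0 D N / delta.
Proof.
  intros HD.
  assert (Hstep : forall n, INR (indicator a1 b1 (frac_part (u n)))
                            <= INR (indicator a2 b2 (frac_part (v n))) + D n / delta).
  { intro n; destruct (base_fp (u n)); destruct (base_fp (v n)).
    apply indicator_close; [lra | lra | apply HD]. }
  induction N as [|N IH].
  - rewrite (count_in_S u), (count_in_S v); simpl count_in; simpl sum_f_R0.
    rewrite !Nat.add_0_l; exact (Hstep O).
  - rewrite (count_in_S u), (count_in_S v), !plus_INR, tech5.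
    specialize (Hstep (S N)); unfold Rdiv in *; lra.
Qed.

Lemma freq_close (u v D : nat -> R) (N : nat) :
  (forall n, Rabs (frac_part (u n) - frac_part (v n)) <= D n) ->
  (1 <= N)%nat -> sum_f_R0 D (pred N) / INR N <= delta * delta ->
  INR (count_in u a1 b1 N) / INR N <= INR (count_in v a2 b2 N) / INR N + delta.
Proof.
  intros HD HN Hmean.
  destruct N as [|N]; [lia|]; simpl pred in Hmean.
  pose proof (count_in_close u v D N HD) as Hcount.
  assert (HN0 : 0 < INR (S N)) by (apply lt_0_INR; lia).
  assert (sum_f_R0 D N / delta <= delta * INR (S N)).
  { apply (Rmult_le_reg_r (/ INR (S N) * delta)).
    - apply Rmult_lt_0_compat; [apply Rinv_0_lt_compat|]; lra.
    - replace (sum_f_R0 D N / delta * (/ INR (S N) * delta)) with (sum_f_R0 D N / INR (S N))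
        by (field; lra).
      replace (delta * INR (S N) * (/ INR (S N) * delta)) with (delta * delta) by (field; lra).
      exact Hmean. }
  apply (Rmult_le_reg_r (INR (S N))); [exact HN0|].
  unfold Rdiv; rewrite Rmult_plus_distr_r, !Rmult_assoc, Rinv_l by lra; lra.
Qed.

End CloseIntervals.

Section Perturbation.

Variables u v D : nat -> R.
Hypothesis u_ud : u_d_mod_1 u.
Hypothesis close : forall n, Rabs (frac_part (u n) - frac_part (v n)) <= D n.

Variables (delta : R) (N0 : nat).
Hypothesis delta_pos : 0 < delta.
Hypothesis mean_small : forall N, (N >= N0)%nat -> sum_f_R0 D (pred N) / INR N <= delta * delta.

Lemma freq_upper (a b : R) : 0 <= a -> a < b -> b <= 1 ->
  exists N1, forall N, (N >= N1)%nat -> INR (count_in v a b N) / INR N < b - a + 4 * delta.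
Proof.
  intros Ha Hab Hb.
  set (a' := Rmax 0 (a - delta)); set (b' := Rmin 1 (b + delta)).
  assert (Ha'b' : 0 <= a' /\ a' < b' /\ b' <= 1 /\ b' - a' <= b - a + 2 * delta)
    by (unfold a', b', Rmax, Rmin; repeat destruct Rle_dec; lra).
  destruct Ha'b' as (Ha' & Hab' & Hb' & Hlen).
  destruct (u_ud a' b' Ha' Hab' Hb' delta delta_pos) as [N1 HN1].
  exists (max 1 (max N0 N1)); intros N HN.
  specialize (HN1 N ltac:(lia)); unfold R_dist in HN1; apply Rabs_def2 in HN1.
  assert (Hclose : forall n, Rabs (frac_part (v n) - frac_part (u n)) <= D n)
    by (intro n; rewrite Rabs_minus_sym; apply close).
  pose proof (freq_close a b a' b' delta delta_pos
                ltac:(intros s t Hs Ht Hst Hin; apply Rabs_def2 in Hst;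
                      unfold a', b', Rmax, Rmin; repeat destruct Rle_dec; lra)
                v u D N Hclose ltac:(lia) (mean_small N ltac:(lia))).
  lra.
Qed.

Lemma freq_lower (a b : R) : 0 <= a -> a < b -> b <= 1 ->
  exists N2, forall N, (N >= N2)%nat -> b - a - 4 * delta < INR (count_in v a b N) / INR N.
Proof.
  intros Ha Hab Hb.
  destruct (Rlt_dec (a + delta) (b - delta)) as [Hlt | Hge].
  - destruct (u_ud (a + delta) (b - delta) ltac:(lra) Hlt ltac:(lra) delta delta_pos)
      as [N2 HN2].
    exists (max 1 (max N0 N2)); intros N HN.
    specialize (HN2 N ltac:(lia)); unfold R_dist in HN2; apply Rabs_def2 in HN2.
    pose proof (freq_close (a + delta) (b - delta) a b delta delta_pos
                  ltac:(intros s t Hs Ht Hst Hin; apply Rabs_def2 in Hst; lra)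
                  u v D N close ltac:(lia) (mean_small N ltac:(lia))).
    lra.
  - exists 1%nat; intros N HN.
    assert (0 <= INR (count_in v a b N) / INR N)
      by (unfold Rdiv; apply Rmult_le_pos; [apply pos_INR |
          left; apply Rinv_0_lt_compat, lt_0_INR; lia]).
    lra.
Qed.

End Perturbation.

Lemma u_d_mod_1_close (u v D : nat -> R) :
  (forall n, Rabs (frac_part (u n) - frac_part (v n)) <= D n) ->
  Un_cv (fun N => sum_f_R0 D (pred N) / INR N) 0 ->
  u_d_mod_1 u -> u_d_mod_1 v.
Proof.
  intros HD Hmean Hu a b Ha Hab Hb eps Heps.
  set (delta := eps / 8).
  assert (Hdelta : 0 < delta) by (unfold delta; lra).
  destruct (Hmean (delta * delta)) as [N0 HN0]; [nra|].
  assert (Hsmall : forall N, (N >= N0)%nat -> sum_f_R0 D (pred N) / INR N <= delta * delta).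
  { intros N HN; specialize (HN0 N HN); unfold R_dist in HN0; rewrite Rminus_0_r in HN0.
    apply Rabs_def2 in HN0; lra. }
  destruct (freq_upper u v D Hu HD delta N0 Hdelta Hsmall a b Ha Hab Hb) as [N1 HN1].
  destruct (freq_lower u v D Hu HD delta N0 Hdelta Hsmall a b Ha Hab Hb) as [N2 HN2].
  exists (max N1 N2); intros N HN.
  specialize (HN1 N ltac:(lia)); specialize (HN2 N ltac:(lia)).
  unfold R_dist; apply Rabs_def1; unfold delta in *; lra.
Qed.

Lemma sum_inv_q_S (q : nat -> nat) (N : nat) :
  sum_inv_q q (S N) = sum_f_R0 (fun k => / INR (q (S k))) N.
Proof.
  induction N as [|N IH]; [simpl; ring|].
  rewrite tech5, <- IH; reflexivity.
Qed.

Lemma cesaro_mean_cv (q : nat -> nat) (c : nat -> R) :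
  Un_cv c 0 -> Un_cv (fun N => sum_inv_q q N / INR N) 0 ->
  Un_cv (fun N => sum_f_R0 (fun n => c (S n) + / INR (q (S n))) (pred N) / INR N) 0.
Proof.
  intros Hc Hinv.
  assert (Hc1 : Un_cv (fun n => c (S n)) 0).
  { apply (Un_cv_ext (fun n => c (n + 1)%nat)); [intro n; now rewrite Nat.add_1_r|].
    exact (CV_shift' c 1 0 Hc). }
  apply (CV_shift _ 1).
  apply (Un_cv_ext (fun n => sum_f_R0 (fun k => c (S k)) (pred (n + 1)) / INR (n + 1)
                             + sum_inv_q q (n + 1) / INR (n + 1))).
  { intro n; rewrite Nat.add_1_r, sum_inv_q_S; simpl pred.
    rewrite sum_plus; unfold Rdiv; ring. }
  rewrite <- (Rplus_0_r 0); apply CV_plus.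
  - exact (CV_shift' _ 1 0 (Cesaro_1 _ 0 Hc1)).
  - exact (CV_shift' _ 1 0 Hinv).
Qed.

Section CantorSeries.

Variable q : nat -> nat.
Hypothesis q_basic : basic_seq q.

Lemma q_ge2 (n : nat) : (1 <= n)%nat -> 2 <= INR (q n).
Proof. intros Hn; apply (le_INR 2); auto. Qed.

Lemma Qprod_pos (n : nat) : 0 < Qprod q n.
Proof.
  induction n as [|n IH]; simpl; [lra|].
  pose proof (q_ge2 (S n) ltac:(lia)); nra.
Qed.

Lemma Q_expansion_digit (x : R) (E : nat -> Z) (n : nat) :
  Q_expansion q x E -> (1 <= n)%nat -> 0 <= IZR (E n) <= INR (q n) - 1.
Proof.
  intros [_ [Hd _]] Hn; destruct (Hd n Hn) as [H0 H1].
  apply IZR_le in H0, H1; rewrite minus_IZR, <- INR_IZR_INZ in H1; lra.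
Qed.

(* [cantor_num E n = (q_1 ... q_n) * (E_0 + E_1/q_1 + ... + E_n/(q_1 ... q_n))], an integer. *)
Fixpoint cantor_num (E : nat -> Z) (n : nat) : Z :=
  match n with
  | O => E O
  | S m => (Z.of_nat (q (S m)) * cantor_num E m + E (S m))%Z
  end.

Definition cantor_partial (E : nat -> Z) (n : nat) : R := IZR (cantor_num E n) / Qprod q n.

Lemma cantor_partial_S (E : nat -> Z) (n : nat) :
  cantor_partial E (S n) = cantor_partial E n + IZR (E (S n)) / Qprod q (S n).
Proof.
  pose proof (Qprod_pos n); pose proof (q_ge2 (S n) ltac:(lia)).
  unfold cantor_partial; simpl.
  rewrite plus_IZR, mult_IZR, <- INR_IZR_INZ; field; lra.
Qed.

Lemma cantor_partial_cv (x : R) (E : nat -> Z) :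
  Q_expansion q x E -> Un_cv (cantor_partial E) x.
Proof.
  intros (HE0 & _ & _ & Hsum).
  assert (Hpartial : forall m, sum_f_R0 (fun k => IZR (E (S k)) / Qprod q (S k)) m
                               = cantor_partial E (S m) - IZR (E O)).
  { induction m as [|m IH]; rewrite cantor_partial_S.
    - unfold cantor_partial; simpl; unfold Rdiv; rewrite Rinv_1; ring.
    - rewrite tech5, IH; ring. }
  intros eps Heps; destruct (Hsum eps Heps) as [N HN].
  exists (S N); intros [|m] Hm; [lia|].
  specialize (HN m ltac:(lia)); unfold R_dist in *.
  rewrite Hpartial in HN.
  replace (cantor_partial E (S m) - x)
    with (cantor_partial E (S m) - IZR (E O) - (x - IZR (E O))) by ring.
  exact HN.
Qed.

Lemma digit_term_le (e : Z) (k : nat) (m : R) :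
  IZR e <= INR (q (S k)) - m ->
  IZR e / Qprod q (S k) <= / Qprod q k - m / Qprod q (S k).
Proof.
  intros He; pose proof (Qprod_pos k); pose proof (q_ge2 (S k) ltac:(lia)).
  replace (/ Qprod q k - m / Qprod q (S k)) with ((INR (q (S k)) - m) / Qprod q (S k))
    by (simpl; field; lra).
  apply Rmult_le_compat_r; [left; apply Rinv_0_lt_compat, Qprod_pos | exact He].
Qed.

Lemma cantor_partial_incr (x : R) (E : nat -> Z) (n i : nat) :
  Q_expansion q x E ->
  0 <= cantor_partial E (n + i) - cantor_partial E n <= / Qprod q n - / Qprod q (n + i).
Proof.
  intros HE; induction i as [|i IH].
  - rewrite Nat.add_0_r; lra.
  - rewrite Nat.add_succ_r, cantor_partial_S.
    pose proof (Q_expansion_digit x E (S (n + i)) HE ltac:(lia)) as Hd.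
    pose proof (digit_term_le (E (S (n + i))) (n + i) 1 ltac:(lra)) as Hterm.
    assert (0 <= IZR (E (S (n + i))) / Qprod q (S (n + i))).
    { apply Rmult_le_pos; [lra | left; apply Rinv_0_lt_compat, Qprod_pos]. }
    unfold Rdiv at 2 in Hterm; rewrite Rmult_1_l in Hterm; lra.
Qed.

Lemma cantor_partial_gap (x : R) (E : nat -> Z) (n k i : nat) :
  Q_expansion q x E -> (n <= k)%nat -> E (S k) <> (Z.of_nat (q (S k)) - 1)%Z ->
  cantor_partial E (S k + i) - cantor_partial E n <= / Qprod q n - / Qprod q (S k).
Proof.
  intros HE Hnk Hne.
  assert (Hd : IZR (E (S k)) <= INR (q (S k)) - 2).
  { destruct HE as [_ [Hdig _]]; destruct (Hdig (S k) ltac:(lia)).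
    rewrite INR_IZR_INZ, <- minus_IZR; apply IZR_le; lia. }
  pose proof (digit_term_le _ k 2 Hd) as Hterm.
  pose proof (cantor_partial_incr x E (S k) i HE) as Htail.
  pose proof (cantor_partial_incr x E n (k - n) HE) as Hhead.
  replace (n + (k - n))%nat with k in Hhead by lia.
  pose proof (cantor_partial_S E k).
  assert (0 < / Qprod q (S k + i)) by apply Rinv_0_lt_compat, Qprod_pos.
  unfold Rdiv at 2 in Hterm; lra.
Qed.

Lemma cantor_tail_bounds (x : R) (E : nat -> Z) (n : nat) :
  Q_expansion q x E -> 0 <= x - cantor_partial E n < / Qprod q n.
Proof.
  intros HE.
  pose proof HE as (_ & _ & Hinf & _).
  destruct (Hinf (S n)) as [j (Hj & _ & Hne)].
  destruct j as [|k]; [lia|].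
  pose proof (cantor_partial_cv x E HE) as Hcv.
  assert (Hx : cantor_partial E n <= x <= cantor_partial E n + (/ Qprod q n - / Qprod q (S k))).
  { apply (Un_cv_bounds (cantor_partial E) (S k)); [intro i | exact Hcv].
    pose proof (cantor_partial_incr x E n (S k + i - n) HE) as Hincr.
    replace (n + (S k + i - n))%nat with (S k + i)%nat in Hincr by lia.
    pose proof (cantor_partial_gap x E n k i HE ltac:(lia) Hne).
    lra. }
  assert (0 < / Qprod q (S k)) by apply Rinv_0_lt_compat, Qprod_pos.
  lra.
Qed.

Lemma T_Q_cantor (x : R) (E : nat -> Z) (n : nat) :
  Q_expansion q x E -> T_Q q n x = Qprod q n * (x - cantor_partial E n).
Proof.
  intros HE; pose proof (cantor_tail_bounds x E n HE) as Htail.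
  pose proof (Qprod_pos n) as HQ.
  symmetry; unfold T_Q; apply (Int_part_frac_part_spec _ (cantor_num E n)).
  - split; [nra|].
    pose proof (Rmult_lt_compat_l (Qprod q n) _ _ HQ (proj2 Htail)) as Hlt.
    rewrite Rinv_r in Hlt; lra.
  - unfold cantor_partial; field; lra.
Qed.

Lemma T_Q_S (x : R) (E : nat -> Z) (n : nat) :
  Q_expansion q x E -> INR (q (S n)) * T_Q q n x = T_Q q (S n) x + IZR (E (S n)).
Proof.
  intros HE; rewrite !(T_Q_cantor x E) by exact HE.
  rewrite cantor_partial_S; pose proof (Qprod_pos n); pose proof (q_ge2 (S n) ltac:(lia)).
  simpl; field; lra.
Qed.

Lemma T_Q_close (x y : R) (E F : nat -> Z) (n : nat) :
  Q_expansion q x E -> Q_expansion q y F ->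
  Rabs (T_Q q n x - T_Q q n y) <= (Rabs (IZR (E (S n) - F (S n))) + 1) / INR (q (S n)).
Proof.
  intros HE HF.
  pose proof (q_ge2 (S n) ltac:(lia)) as Hq.
  assert (Hnext : Rabs (T_Q q (S n) x - T_Q q (S n) y) <= 1).
  { unfold T_Q; pose proof (base_fp (Qprod q (S n) * x)); pose proof (base_fp (Qprod q (S n) * y)).
    apply Rabs_le; lra. }
  assert (Hdiff : T_Q q n x - T_Q q n y
                  = ((T_Q q (S n) x - T_Q q (S n) y) + IZR (E (S n) - F (S n))) / INR (q (S n))).
  { pose proof (T_Q_S x E n HE); pose proof (T_Q_S y F n HF).
    rewrite minus_IZR; apply (Rmult_eq_reg_l (INR (q (S n)))); [|lra].
    field_simplify; lra. }
  rewrite Hdiff; unfold Rdiv; rewrite Rabs_mult, Rabs_inv, (Rabs_right (INR _)) by lra.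
  apply Rmult_le_compat_r; [left; apply Rinv_0_lt_compat; lra|].
  eapply Rle_trans; [apply Rabs_triang | lra].
Qed.

End CantorSeries.

Theorem corollary3p3 (q : nat -> nat) (x y : R) (E F : nat -> Z) :
  basic_seq q ->
  Un_cv (fun N => sum_inv_q q N / INR N) 0 ->
  Q_expansion q x E ->
  Q_distribution_normal q x ->
  Q_expansion q y F ->
  Un_cv (fun n => Rabs (IZR (E n - F n)) / INR (q n)) 0 ->
  Q_distribution_normal q y.
Proof.
  intros Hq Hinv HE Hx HF Hdigits.
  apply (u_d_mod_1_close (fun n => T_Q q n x) (fun n => T_Q q n y)
           (fun n => Rabs (IZR (E (S n) - F (S n))) / INR (q (S n)) + / INR (q (S n)))).
  - intro n; unfold T_Q; rewrite !frac_part_frac_part; fold (T_Q q n x) (T_Q q n y).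
    eapply Rle_trans; [exact (T_Q_close q Hq x y E F n HE HF)|].
    right; pose proof (q_ge2 q Hq (S n) ltac:(lia)); field; lra.
  - exact (cesaro_mean_cv q _ Hdigits Hinv).
  - exact Hx.
Qed.
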